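(* For every leaf node $u$ in a partially built threshold tree $\mathcal{T}_t$, we have $\frac{1}{\sqrt{2}} R_u \leq D_u \leq 2R_u$.
   Context: Let $C_u\subseteq \mathbb{R}^d$ be the finite set of centers assigned to node $u$ of the threshold tree being built by the algorithm. Let $m^u$ be a (coordinate-wise) median of $C_u$, i.e., a point such that for every coordinate $i$, each of the sets $\{c\in C_u: c_i < m^u_i\}$ and $\{c\in C_u: c_i > m^u_i\}$ contains at most half of the points of $C_u$. Let $R_u = \max\{\|c-m^u\|_2 : c\in C_u\}$ be the maximum distance from $m^u$ to a center in $C_u$, and let $D_u = \max\{\|c'-c''\|_2 : c',c''\in C_u\}$ be the diameter of $C_u$. *)

From mathcomp Require Import all_boot all_order all_algebra.
Set Implicit Arguments. Unset Strict Implicit. Unset Printing Implicit Defensive.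
Import Order.TTheory GRing.Theory Num.Theory.
Local Open Scope ring_scope.

Definition eucl_dist (R : rcfType) (d : nat) (x y : 'rV[R]_d) : R :=
  Num.sqrt (\sum_(i < d) (x ord0 i - y ord0 i) ^+ 2).

Definition coord_median (R : rcfType) (d : nat) (C : seq 'rV[R]_d) (m : 'rV[R]_d) : Prop :=
  forall i : 'I_d,
    leq (count (fun c : 'rV[R]_d => c ord0 i < m ord0 i) C).*2 (size C) /\
    leq (count (fun c : 'rV[R]_d => m ord0 i < c ord0 i) C).*2 (size C).

(* R_u = max_{c in C} ||c - m||_2 (distances are >= 0, so 0 is a neutral start) *)
Definition max_radius (R : rcfType) (d : nat) (C : seq 'rV[R]_d) (m : 'rV[R]_d) : R :=
  \big[Num.max/0]_(c <- C) eucl_dist c m.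

Definition diameter (R : rcfType) (d : nat) (C : seq 'rV[R]_d) : R :=
  \big[Num.max/0]_(c1 <- C) \big[Num.max/0]_(c2 <- C) eucl_dist c1 c2.

From mathcomp Require Import all_boot all_order all_algebra.
From mathcomp Require Import ring zify.
Import Order.TTheory GRing.Theory Num.Theory.
Set Implicit Arguments.
Unset Strict Implicit.
Unset Printing Implicit Defensive.
Local Open Scope ring_scope.

(* The upper bound D <= 2 R is the triangle inequality through the median.
   For the lower bound fix a centre c and a coordinate i: by the median
   property at least half of the centres c' lie on the other side of m_i from
   c_i, and for those (c_i - c'_i)^2 >= (c_i - m_i)^2.  Summing over i and c'
   gives |C| ||c - m||^2 <= 2 sum_c' ||c - c'||^2 <= 2 |C| D^2. *)

Section CauchySchwarz.
Variables (R : realDomainType) (I : finType).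

Lemma CauchySchwarz_sum (a b : I -> R) :
  (\sum_i a i * b i) ^+ 2 <= (\sum_i a i ^+ 2) * (\sum_i b i ^+ 2).
Proof.
have Lagrange : ((\sum_i a i ^+ 2) * (\sum_i b i ^+ 2) - (\sum_i a i * b i) ^+ 2) *+ 2
    = \sum_i \sum_j (a i * b j - a j * b i) ^+ 2.
  have AB : (\sum_i a i ^+ 2) * (\sum_i b i ^+ 2) = \sum_i \sum_j a i ^+ 2 * b j ^+ 2.
    by rewrite mulr_suml; apply: eq_bigr => i _; rewrite mulr_sumr.
  have BA : (\sum_i a i ^+ 2) * (\sum_i b i ^+ 2) = \sum_i \sum_j a j ^+ 2 * b i ^+ 2.
    by rewrite AB exchange_big.
  have AB2 : (\sum_i a i * b i) ^+ 2 = \sum_i \sum_j a i * b i * (a j * b j).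
    by rewrite expr2 mulr_suml; apply: eq_bigr => i _; rewrite mulr_sumr.
  rewrite mulrnBl mulr2n {1}AB BA AB2 -!big_split -sumrMnl -sumrB /=.
  apply: eq_bigr => i _; rewrite -!big_split -sumrMnl -sumrB /=.
  by apply: eq_bigr => j _; ring.
have : 0 <= \sum_i \sum_j (a i * b j - a j * b i) ^+ 2.
  by do 2!apply: sumr_ge0 => ? _; apply: sqr_ge0.
by rewrite -Lagrange pmulrn_lge0 // subr_ge0.
Qed.

End CauchySchwarz.

Section HalfCount.
Variable T : Type.
Implicit Types (s : seq T) (P : pred T).

Lemma half_count_predC s P :
  ((count P s).*2 <= size s)%N -> (size s <= (count (predC P) s).*2)%N.
Proof. by have := count_predC P s; lia. Qed.

Variable R : realDomainType.

Lemma sum_ge_half s P (f : T -> R) a :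
  (size s <= (count P s).*2)%N -> 0 <= a ->
  (forall x, P x -> a <= f x) -> (forall x, 0 <= f x) ->
  (size s)%:R * a <= 2 * \sum_(x <- s) f x.
Proof.
move=> half a_ge0 Pf f_ge0.
have count_le : a *+ count P s <= \sum_(x <- s) f x.
  rewrite (bigID P) /= -[leLHS]addr0 lerD ?sumr_ge0 //.
  by rewrite -[leLHS]addr0 -iter_addr -big_const_seq ler_sum.
apply: le_trans (ler_wpM2l _ count_le) => //.
by rewrite -[a *+ _]mulr_natr mulrCA [leLHS]mulrC ler_wpM2l // -natrM ler_nat mul2n.
Qed.

End HalfCount.

Section Euclidean.
Variables (R : rcfType) (d : nat).
Implicit Types (x y z m : 'rV[R]_d) (C : seq 'rV[R]_d).

Definition sqr_dist x y : R := \sum_(i < d) (x ord0 i - y ord0 i) ^+ 2.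

Lemma sqr_dist_ge0 x y : 0 <= sqr_dist x y.
Proof. by apply: sumr_ge0 => i _; apply: sqr_ge0. Qed.

Lemma sqr_eucl_dist x y : eucl_dist x y ^+ 2 = sqr_dist x y.
Proof. exact/sqr_sqrtr/sqr_dist_ge0. Qed.

Lemma eucl_dist_ge0 x y : 0 <= eucl_dist x y.
Proof. exact: sqrtr_ge0. Qed.

Lemma eucl_distC x y : eucl_dist x y = eucl_dist y x.
Proof.
by congr Num.sqrt; apply: eq_bigr => i _; rewrite -sqrrN opprB.
Qed.

Lemma eucl_dist_triangle x y z : eucl_dist x z <= eucl_dist x y + eucl_dist y z.
Proof.
pose a i := x ord0 i - y ord0 i; pose b i := y ord0 i - z ord0 i.
have A_ge0 : 0 <= \sum_i a i ^+ 2 := sqr_dist_ge0 x y.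
have B_ge0 : 0 <= \sum_i b i ^+ 2 := sqr_dist_ge0 y z.
have sum_ab_le : \sum_i a i * b i <= eucl_dist x y * eucl_dist y z.
  rewrite -sqrtrM // (le_trans (real_ler_norm _)) ?num_real //.
  by rewrite -sqrtr_sqr ler_sqrt ?mulr_ge0 // CauchySchwarz_sum.
have expand : sqr_dist x z = \sum_i a i ^+ 2 + \sum_i b i ^+ 2 + (\sum_i a i * b i) *+ 2.
  rewrite -big_split -sumrMnl -big_split /=.
  by apply: eq_bigr => i _; rewrite /a /b; ring.
rewrite -(ler_pXn2r (_ : 0 < 2)%N) ?nnegrE ?addr_ge0 ?eucl_dist_ge0 //.
rewrite sqr_eucl_dist expand sqrrD !sqr_eucl_dist.
by rewrite [leRHS]addrAC lerD2l lerMn2r.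
Qed.

Lemma sqrB_le_across (a c b : R) :
  0 <= (a - c) * (c - b) -> (a - c) ^+ 2 <= (a - b) ^+ 2.
Proof.
have -> : (a - b) ^+ 2 = (a - c) ^+ 2 + ((a - c) * (c - b) *+ 2 + (c - b) ^+ 2).
  by ring.
by move=> across; rewrite lerDl addr_ge0 ?mulrn_wge0 ?sqr_ge0.
Qed.

Lemma median_sqr_dist_le C m c : coord_median C m ->
  (size C)%:R * sqr_dist c m <= 2 * \sum_(c' <- C) sqr_dist c c'.
Proof.
move=> median; rewrite /sqr_dist mulr_sumr exchange_big mulr_sumr /=.
apply: ler_sum => i _; have [below above] := median i.
pose across (c' : 'rV[R]_d) := 0 <= (c ord0 i - m ord0 i) * (m ord0 i - c' ord0 i).
apply: (sum_ge_half (P := across)).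
- have [le_mc|lt_cm] := leP (m ord0 i) (c ord0 i).
  + apply: leq_trans (half_count_predC above) _; rewrite leq_double.
    apply: sub_count => c' /=; rewrite -leNgt -subr_ge0 => ?.
    by rewrite /across mulr_ge0 // subr_ge0.
  + apply: leq_trans (half_count_predC below) _; rewrite leq_double.
    apply: sub_count => c' /=; rewrite -leNgt -subr_le0 => ?.
    by rewrite /across mulr_le0 // subr_le0 ltW.
- exact: sqr_ge0.
- by move=> c'; apply: sqrB_le_across.
- by move=> c'; apply: sqr_ge0.
Qed.

Lemma max_radius_ge0 C m : 0 <= max_radius C m.
Proof. exact: bigmax_ge_id. Qed.

Lemma diameter_ge0 C : 0 <= diameter C.
Proof. exact: bigmax_ge_id. Qed.

Lemma eucl_dist_le_max_radius C m c : c \in C -> eucl_dist c m <= max_radius C m.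
Proof. by move=> cC; apply: (le_bigmax_seq _ _ _ (fun c => eucl_dist c m) cC). Qed.

Lemma eucl_dist_le_diameter C c1 c2 :
  c1 \in C -> c2 \in C -> eucl_dist c1 c2 <= diameter C.
Proof.
move=> c1C c2C; apply: le_trans (le_bigmax_seq _ _ _ _ c1C isT).
exact: (le_bigmax_seq _ _ _ (fun c2 => eucl_dist c1 c2) c2C).
Qed.

Lemma diameter_le_twice_max_radius C m : diameter C <= 2 * max_radius C m.
Proof.
have ge0 : 0 <= 2 * max_radius C m by rewrite mulr_ge0 ?max_radius_ge0.
rewrite /diameter big_seq; apply: bigmax_le => // c1 c1C.
rewrite big_seq; apply: bigmax_le => // c2 c2C.
apply: le_trans (eucl_dist_triangle c1 m c2) _.
by rewrite (eucl_distC m) mulr2n mulrDl mul1r lerD ?eucl_dist_le_max_radius.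
Qed.

Lemma median_eucl_dist_le C m c : coord_median C m -> c \in C ->
  eucl_dist c m <= Num.sqrt 2 * diameter C.
Proof.
move=> median cC.
have size_gt0 : (0 : R) < (size C)%:R by rewrite ltr0n; case: C cC {median}.
set D := diameter C.
have sum_le : \sum_(c' <- C) sqr_dist c c' <= (size C)%:R * D ^+ 2.
  rewrite -(sum1_size C) natr_sum mulr_suml !big_seq.
  apply: ler_sum => c' c'C; rewrite mul1r -sqr_eucl_dist.
  by rewrite lerXn2r ?nnegrE ?eucl_dist_ge0 ?diameter_ge0 ?eucl_dist_le_diameter.
have sqr_le : sqr_dist c m <= 2 * D ^+ 2.
  rewrite -(ler_pM2l size_gt0); apply: le_trans (median_sqr_dist_le c median) _.
  by rewrite mulrCA ler_wpM2l.
have -> : Num.sqrt 2 * D = Num.sqrt (2 * D ^+ 2).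
  by rewrite sqrtrM // sqrtr_sqr ger0_norm ?diameter_ge0.
exact: ler_wsqrtr.
Qed.

Lemma max_radius_le_sqrt2_diameter C m : coord_median C m ->
  max_radius C m <= Num.sqrt 2 * diameter C.
Proof.
move=> median; rewrite /max_radius big_seq.
apply: bigmax_le => [|c cC]; last exact: median_eucl_dist_le.
by rewrite mulr_ge0 ?sqrtr_ge0 ?diameter_ge0.
Qed.

End Euclidean.

Theorem lemma2 (R : rcfType) (d : nat) (C : seq 'rV[R]_d) (m : 'rV[R]_d) :
  C != [::] -> uniq C -> coord_median C m ->
  max_radius C m / Num.sqrt 2 <= diameter C /\ diameter C <= 2 * max_radius C m.
Proof.
move=> _ _ median; split; last exact: diameter_le_twice_max_radius.
by rewrite ler_pdivrMr ?sqrtr_gt0 // mulrC max_radius_le_sqrt2_diameter.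
Qed.
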